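(* Let $T$ be a ranked monad on $\mathbf{Set}$, let $B$ be the Boolean algebra of complemented opens of $\mathrm{LB}_0T$ and $\mathcal{J}$ the set of partitions of $\mathrm{LB}_0T$, and let $\approx$ be the congruence on the free $B_{\mathcal{J}}$-set $T1[B]^{\mathcal{J}}$ defining the sheaf of transitions $F_T$. Then for $x,y\in T1[B]^{\mathcal{J}}$: $x\approx y$ iff for all $m,n\in T1$ we have $m\sim_{x(m)\wedge y(n)}n$. Moreover, for $m,n\in T1$ and $b\in B$: $m\equiv_b n$ in $F_T$ iff $m\sim_b n$.
   Context: Monads: sets $TA$, $\mathrm{return}$, $\mathbin{\gg\!=}\colon TA\times(TB)^A\to TB$ with monad laws; $t\gg s:=t\mathbin{\gg\!=}\lambda a.s$; ranked of rank $\kappa$ (regular): every $t\in TA$ is $t'\mathbin{\gg\!=}\lambda i.\mathrm{return}\,f(i)$ with $t'\in TI$, $|I|<\kappa$. $1=\{*\}$, $2=\{0,1\}$. $\mathrm{LB}_0T$: frame presented by generators $[b]$ ($b\in T2$) with relations $[t\mapsto a]\wedge[t\mapsto a']=\bot$ ($a\ne a'$), $[t\gg\mathrm{return}\,a\mapsto a]=\top$, $[t\mathbin{\gg\!=}u\mapsto b]=\bigvee_a[t\mapsto a]\wedge[t\gg u(a)\mapsto b]$, where $[t\mapsto a]:=[t\mathbin{\gg\!=}\lambda a'.\mathrm{return}(\delta_a(a'))]$, $\delta_a(a')=1$ iff $a'=a$. It is ultraparacompact, and each $P^{(t)}:=\{[t\mapsto a]:a\in A\}\setminus\{\bot\}$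 lies in $\mathcal{J}$ (partition = pairwise disjoint cover without $\bot$). Trace equivalence: $[\![m\sim_1m']\!]=\bigvee\{[t\mapsto a]:|A|\le\kappa,t\in TA,u,u'\colon A\to T1,a\in A,u(a)=u'(a),m=t\mathbin{\gg\!=}u,m'=t\mathbin{\gg\!=}u'\}$; for $k\ge2$, $[\![m_1\sim_km_k]\!]=\bigvee\{\bigwedge_{i=1}^{k-1}[\![m_i\sim_1m_{i+1}]\!]:m_2,\dots,m_{k-1}\in T1\}$; $[\![m\sim m']\!]=\bigvee_{k\ge1}[\![m\sim_km']\!]$; $m\sim_bm'$ iff $b\le[\![m\sim m']\!]$. $B_{\mathcal{J}}$-sets: a set with binary operations $b(-,-)$ ($b\in B$) and $P$-ary operations $P(-)$ ($P\in\mathcal{J}$) satisfying $b(x,x)=x$, $b(b(x,y),z)=b(x,z)$, $b(x,b(y,z))=b(x,z)$, $\top(x,y)=x$, $(\neg b)(x,y)=b(y,x)$, $(b\wedge c)(x,y)=b(c(x,y),y)$, $P(\lambda b.z)=z$, $P(\lambda b.b(x_b,y_b))=P(\lambda b.x_b)$, $b(P(x),x_b)=x_b$; $x\equiv_by$ iff $b(x,y)=y$. The free $B_{\mathcal{J}}$-set $T1[B]^{\mathcal{J}}$ is the set of functions $h\colon T1\to B$ with $\{h(m):m\in T1\}\setminus\{\bot\}\in\mathcal{J}$, with $P(\lambda c.h_c)=\lambda m.\bigvee_{c\in P}c\wedge h_c(m)$ (and $b(h,h')=\lambda m.(b\wedge h(m))\vee(\neg b\wedge h'(m))$); $m\in T1$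 is identified with $\delta_m$ ($\delta_m(m)=\top$, $\delta_m(m')=\bot$ otherwise). A congruence is an equivalence relation $\approx$ such that $x_c\approx y_c$ for all $c\in P$ implies $P(x)\approx P(y)$, for all $P\in\mathcal{J}$. $\approx$ is the smallest congruence with $\delta_{t\mathbin{\gg\!=}u}\approx P^{(t)}(\lambda[t\mapsto a].\,\delta_{t\gg u(a)})$ for all sets $A$, $t\in TA$, $u\colon A\to T1$; $F_T:=T1[B]^{\mathcal{J}}/{\approx}$ with induced operations, and $m\equiv_bn$ in $F_T$ means $b(\delta_m,\delta_n)\approx\delta_n$. *)

From Stdlib Require Import ClassicalEpsilon.

Set Implicit Arguments.
Unset Strict Implicit.

(* Cardinals, represented by types.                                   *)

Definition card_le (A B : Type) : Prop :=
  exists f : A -> B, forall x y, f x = f y -> x = y.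

Definition card_lt (A B : Type) : Prop := card_le A B /\ ~ card_le B A.

Definition regular_card (K : Type) : Prop :=
  card_le nat K /\
  forall (I : Type) (X : I -> Type),
    card_lt I K -> (forall i, card_lt (X i) K) -> card_lt {i : I & X i} K.

Record Monad := {
  MT : Type -> Type;
  mret : forall A : Type, A -> MT A;
  mbind : forall A B : Type, MT A -> (A -> MT B) -> MT B;
  mbind_ret_l : forall (A B : Type) (a : A) (f : A -> MT B),
      mbind (mret a) f = f a;
  mbind_ret_r : forall (A : Type) (t : MT A), mbind t (@mret A) = t;
  mbind_assoc : forall (A B C : Type) (t : MT A) (f : A -> MT B) (g : B -> MT C),
      mbind (mbind t f) g = mbind t (fun a => mbind (f a) g)
}.

Arguments mret {m A} a.
Arguments mbind {m A B} t f.

Definition mthen (M : Monad) (A B : Type) (t : MT M A) (s : MT M B) : MT M B :=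
  mbind t (fun _ => s).

Definition ranked_of_rank (M : Monad) (K : Type) : Prop :=
  regular_card K /\
  forall (A : Type) (t : MT M A),
    exists (I : Type) (t' : MT M I) (f : I -> A),
      card_lt I K /\ t = mbind t' (fun i => mret (f i)).

Definition delta_bool (A : Type) (a a' : A) : bool :=
  if excluded_middle_informative (a' = a) then true else false.

Definition mapsto (M : Monad) (A : Type) (t : MT M A) (a : A) : MT M bool :=
  mbind t (fun a' => mret (delta_bool a a')).

Record Frame := {
  fc :> Type;
  fle : fc -> fc -> Prop;
  fmeet : fc -> fc -> fc;
  fjoin : (fc -> Prop) -> fc;
  ftop : fc;
  fbot : fc;
  fle_refl : forall a, fle a a;
  fle_trans : forall a b c, fle a b -> fle b c -> fle a c;
  fle_antisym : forall a b, fle a b -> fle b a -> a = b;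
  fmeet_glb : forall a b c, fle c (fmeet a b) <-> (fle c a /\ fle c b);
  fjoin_ub : forall (S : fc -> Prop) a, S a -> fle a (fjoin S);
  fjoin_lub : forall (S : fc -> Prop) c, (forall a, S a -> fle a c) -> fle (fjoin S) c;
  ftop_max : forall a, fle a ftop;
  fbot_min : forall a, fle fbot a;
  fdistr : forall a (S : fc -> Prop),
      fmeet a (fjoin S) = fjoin (fun v => exists s, S s /\ v = fmeet a s)
}.

Arguments fle {f} a b.
Arguments fmeet {f} a b.
Arguments fjoin {f} S.
Arguments ftop {f}.
Arguments fbot {f}.

Definition fjoin2 (L : Frame) (a b : L) : L := fjoin (fun v => v = a \/ v = b).

(* pseudocomplement; equals the complement on complemented elements *)
Definition fneg (L : Frame) (a : L) : L := fjoin (fun c => fmeet a c = fbot).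

Definition frame_hom (L M : Frame) (h : L -> M) : Prop :=
  (forall a b, h (fmeet a b) = fmeet (h a) (h b)) /\
  h ftop = ftop /\
  (forall S : L -> Prop, h (fjoin S) = fjoin (fun v => exists s, S s /\ v = h s)).

(* The frame LB_0 T, presented by generators [b] (b in T2) and         *)
(* relations; characterized by its universal property.                 *)

Definition LB0_relations (M : Monad) (F : Frame) (g : MT M bool -> F) : Prop :=
  (forall (A : Type) (t : MT M A) (a a' : A),
      a <> a' -> fmeet (g (mapsto t a)) (g (mapsto t a')) = fbot) /\
  (forall (A : Type) (t : MT M A) (a : A),
      g (mapsto (mthen t (mret a)) a) = ftop) /\
  (forall (A B : Type) (t : MT M A) (u : A -> MT M B) (b : B),
      g (mapsto (mbind t u) b) =
      fjoin (fun v => exists a : A,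
                 v = fmeet (g (mapsto t a)) (g (mapsto (mthen t (u a)) b)))).

Definition is_LB0 (M : Monad) (L : Frame) (gen : MT M bool -> L) : Prop :=
  LB0_relations gen /\
  forall (F : Frame) (g : MT M bool -> F),
    LB0_relations g ->
    exists h : L -> F,
      (frame_hom h /\ forall b, h (gen b) = g b) /\
      (forall h' : L -> F, frame_hom h' -> (forall b, h' (gen b) = g b) ->
                           forall x, h' x = h x).

Definition complemented (L : Frame) (b : L) : Prop :=
  exists c : L, fmeet b c = fbot /\ fjoin2 b c = ftop.

Definition partition (L : Frame) (P : L -> Prop) : Prop :=
  (forall c, P c -> c <> fbot) /\
  (forall c d, P c -> P d -> c <> d -> fmeet c d = fbot) /\
  fjoin P = ftop.

Section Trace.
Variables (M : Monad) (K : Type) (L : Frame) (gen : MT M bool -> L).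

Definition T1 := MT M unit.

Definition trace1 (m m' : T1) : L :=
  fjoin (fun v => exists (A : Type) (t : MT M A) (u u' : A -> T1) (a : A),
             card_le A K /\ u a = u' a /\ m = mbind t u /\ m' = mbind t u' /\
             v = gen (mapsto t a)).

Fixpoint bigmeet (f : nat -> L) (k : nat) : L :=
  match k with
  | 0 => ftop
  | S k' => fmeet (bigmeet f k') (f k')
  end.

(* [[ m_1 ~_k m_k ]] for k >= 1 (the value at k = 0 is unused) *)
Definition tracek (k : nat) (m n : T1) : L :=
  match k with
  | 0 => fbot
  | 1 => trace1 m n
  | _ => fjoin (fun v => exists s : nat -> T1,
                    s 1 = m /\ s k = n /\
                    v = bigmeet (fun i => trace1 (s (i + 1)) (s (i + 2))) (k - 1))
  end.

Definition trace (m n : T1) : L :=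
  fjoin (fun v => exists k, 1 <= k /\ v = tracek k m n).

Definition trace_eq_b (b : L) (m m' : T1) : Prop := fle b (trace m m').

(* h : T1 -> B whose family of non-bottom values is a partition *)
Definition free_elem (h : T1 -> L) : Prop :=
  (forall m, complemented (h m)) /\
  (forall m m', m <> m' -> fmeet (h m) (h m') = fbot) /\
  fjoin (fun v => exists m, v = h m) = ftop.

Definition dirac (m : T1) : T1 -> L :=
  fun m' => if excluded_middle_informative (m = m') then ftop else fbot.

Definition Pop (P : L -> Prop) (x : L -> T1 -> L) : T1 -> L :=
  fun m => fjoin (fun v => exists c, P c /\ v = fmeet c (x c m)).

Definition bop (b : L) (h h' : T1 -> L) : T1 -> L :=
  fun m => fjoin2 (fmeet b (h m)) (fmeet (fneg b) (h' m)).

Definition Pt (A : Type) (t : MT M A) : L -> Prop :=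
  fun c => (exists a, c = gen (mapsto t a)) /\ c <> fbot.

Definition gen_family (A : Type) (t : MT M A) (u : A -> T1) : L -> T1 -> L :=
  fun c m => fjoin (fun v => exists a, c = gen (mapsto t a) /\
                                v = dirac (mthen t (u a)) m).

Definition is_congruence (R : (T1 -> L) -> (T1 -> L) -> Prop) : Prop :=
  (forall x y, R x y -> free_elem x /\ free_elem y) /\
  (forall x, free_elem x -> R x x) /\
  (forall x y, R x y -> R y x) /\
  (forall x y z, R x y -> R y z -> R x z) /\
  (forall (P : L -> Prop) (x y : L -> T1 -> L),
      partition P ->
      (forall c, P c -> R (x c) (y c)) ->
      R (Pop P x) (Pop P y)).

Definition contains_generators (R : (T1 -> L) -> (T1 -> L) -> Prop) : Prop :=
  forall (A : Type) (t : MT M A) (u : A -> T1),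
    R (dirac (mbind t u)) (Pop (Pt t) (gen_family t u)).

Definition approx (x y : T1 -> L) : Prop :=
  forall R, is_congruence R -> contains_generators R -> R x y.

End Trace.

(* If x ≈ y then x m ∧ y n ≤ [[m ∼ n]] for all m, n: this relation is itself a
   congruence containing the generating pairs, because trace equivalence is an
   equivalence and, using the rank, [t ↦ a] ≤ [[t >>= u ∼₁ t >> u(a)]].

   Conversely, fix a congruence R containing the generating pairs. The complemented c
   with δm ≡_c δn form a closed sieve: they are closed downwards and under
   complemented disjoint joins. Closed sieves of complemented elements form a frame
   in which the defining relations of LB₀T hold, so the universal property yields a
   frame map h into it with c ∈ h(c) for complemented c. The sieve of c with
   δm ≡_c δn is transitive in (m, n) and contains h([[_ ∼₁ _]]), hence contains
   h([[m ∼ n]]); so c ≤ [[m ∼ n]] gives δm ≡_c δn. General x ≈ y is obtained by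
   gluing these along the partition {x m ∧ y n}. *)

From Stdlib Require Import ClassicalEpsilon FunctionalExtensionality PropExtensionality
  ProofIrrelevance Arith Lia.

Section FrameTheory.
Context {L : Frame}.
Implicit Types a b c d z : L.

Lemma fle_meet_l a b : fle (fmeet a b) a.
Proof. exact (proj1 (proj1 (fmeet_glb a b _) (fle_refl _))). Qed.

Lemma fle_meet_r a b : fle (fmeet a b) b.
Proof. exact (proj2 (proj1 (fmeet_glb a b _) (fle_refl _))). Qed.

Lemma fle_meet a b c : fle c a -> fle c b -> fle c (fmeet a b).
Proof. intros; apply fmeet_glb; auto. Qed.

Lemma fmeet_mono a b c d : fle a c -> fle b d -> fle (fmeet a b) (fmeet c d).
Proof.
  intros; apply fle_meet.
  - eapply fle_trans; [apply fle_meet_l|auto].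
  - eapply fle_trans; [apply fle_meet_r|auto].
Qed.

Lemma fmeet_comm a b : fmeet a b = fmeet b a.
Proof. apply fle_antisym; apply fle_meet; auto using fle_meet_l, fle_meet_r. Qed.

Lemma fmeet_l a b : fle a b -> fmeet a b = a.
Proof. intros; apply fle_antisym; auto using fle_meet_l, fle_meet, fle_refl. Qed.

Lemma fmeet_r a b : fle b a -> fmeet a b = b.
Proof. intros; rewrite fmeet_comm; apply fmeet_l; auto. Qed.

Lemma fle_bot_eq a : fle a fbot -> a = fbot.
Proof. intros; apply fle_antisym; auto using fbot_min. Qed.

Lemma ftop_le_eq a : fle ftop a -> a = ftop.
Proof. intros; apply fle_antisym; auto using ftop_max. Qed.

Lemma fmeet_top_r a : fmeet a ftop = a.
Proof. apply fmeet_l, ftop_max. Qed.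

Lemma fmeet_bot_r a : fmeet a fbot = fbot.
Proof. apply fmeet_r, fbot_min. Qed.

Lemma fmeet_bot_l a : fmeet fbot a = fbot.
Proof. apply fmeet_l, fbot_min. Qed.

Lemma fmeet_idem a : fmeet a a = a.
Proof. apply fmeet_l, fle_refl. Qed.

Lemma fmeet_bot_mono {a b c d} :
  fmeet c d = fbot -> fle a c -> fle b d -> fmeet a b = fbot.
Proof. intros Hcd Ha Hb; apply fle_bot_eq; rewrite <- Hcd; apply fmeet_mono; auto. Qed.

Lemma fle_join (S : L -> Prop) a b : S b -> fle a b -> fle a (fjoin S).
Proof. intros; eapply fle_trans; eauto using fjoin_ub. Qed.

Lemma fmeet_join_le (S : L -> Prop) a z :
  (forall s, S s -> fle (fmeet a s) z) -> fle (fmeet a (fjoin S)) z.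
Proof. intros H; rewrite fdistr; apply fjoin_lub; intros v [s [Hs ->]]; auto. Qed.

Lemma fjoin_meet_le (S : L -> Prop) a z :
  (forall s, S s -> fle (fmeet s a) z) -> fle (fmeet (fjoin S) a) z.
Proof.
  intros H; rewrite fmeet_comm; apply fmeet_join_le; intros; rewrite fmeet_comm; auto.
Qed.

Lemma fjoin_empty : fjoin (fun _ : L => False) = fbot.
Proof. apply fle_bot_eq, fjoin_lub; intros _ []. Qed.

Lemma fjoin2_l a b : fle a (fjoin2 a b).
Proof. apply fjoin_ub; auto. Qed.

Lemma fjoin2_r a b : fle b (fjoin2 a b).
Proof. apply fjoin_ub; auto. Qed.

Lemma fjoin2_lub a b c : fle a c -> fle b c -> fle (fjoin2 a b) c.
Proof. intros; apply fjoin_lub; intros v [-> | ->]; auto. Qed.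

Lemma fmeet_fneg a : fmeet a (fneg a) = fbot.
Proof. apply fle_bot_eq, fmeet_join_le; intros s ->; apply fle_refl. Qed.

Lemma fmeet_fneg_l a : fmeet (fneg a) a = fbot.
Proof. rewrite fmeet_comm; apply fmeet_fneg. Qed.

Lemma fneg_greatest a b : fmeet a b = fbot -> fle b (fneg a).
Proof. intros; apply fjoin_ub; auto. Qed.

Lemma complemented_iff a : complemented a <-> fjoin2 a (fneg a) = ftop.
Proof.
  split.
  - intros [c [Hmeet Hjoin]]; apply ftop_le_eq; rewrite <- Hjoin.
    apply fjoin2_lub; [apply fjoin2_l|].
    eapply fle_trans; [apply fneg_greatest, Hmeet|apply fjoin2_r].
  - intros H; exists (fneg a); auto using fmeet_fneg.
Qed.

Lemma complemented_cases c a z : complemented c ->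
  fle (fmeet a c) z -> fle (fmeet a (fneg c)) z -> fle a z.
Proof.
  intros Hc H1 H2; apply complemented_iff in Hc.
  rewrite <- (fmeet_top_r a), <- Hc; apply fmeet_join_le; intros s [-> | ->]; auto.
Qed.

Lemma complemented_of_disjoint_cover (I : Type) (f : I -> L) i :
  (forall j, j <> i -> fmeet (f i) (f j) = fbot) ->
  fjoin (fun v => exists j, v = f j) = ftop -> complemented (f i).
Proof.
  intros Hdisj Hcover; apply complemented_iff, ftop_le_eq; rewrite <- Hcover.
  apply fjoin_lub; intros v [j ->].
  destruct (classic (j = i)) as [-> | Hji]; [apply fjoin2_l|].
  eapply fle_trans; [apply fneg_greatest, Hdisj, Hji|apply fjoin2_r].
Qed.

Lemma complemented_bot : complemented (fbot : L).
Proof. exists ftop; split; [apply fmeet_bot_l|apply ftop_le_eq, fjoin2_r]. Qed.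

Lemma complemented_meet a b :
  complemented a -> complemented b -> complemented (fmeet a b).
Proof.
  intros Ha Hb; apply complemented_iff, ftop_le_eq.
  apply (complemented_cases a); [auto| |].
  - apply (complemented_cases b); [auto| |].
    + eapply fle_trans; [|apply fjoin2_l]; apply fmeet_mono; auto using fle_meet_r, fle_refl.
    + eapply fle_trans; [|apply fjoin2_r]; apply fneg_greatest.
      apply (fmeet_bot_mono (fmeet_fneg b)); auto using fle_meet_r.
  - eapply fle_trans; [|apply fjoin2_r]; apply fneg_greatest.
    apply (fmeet_bot_mono (fmeet_fneg a)); auto using fle_meet_l, fle_meet_r.
Qed.

Definition fimp a b : L := fjoin (fun c => fle (fmeet c a) b).

Lemma fimp_intro a b c : fle (fmeet c a) b -> fle c (fimp a b).
Proof. intros; apply fjoin_ub; auto. Qed.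

Lemma fimp_elim a b : fle (fmeet (fimp a b) a) b.
Proof. apply fjoin_meet_le; auto. Qed.

Lemma fimp_trans a b c : fle (fmeet (fimp a b) (fimp b c)) (fimp a c).
Proof.
  apply fimp_intro; eapply fle_trans; [|apply (fimp_elim b c)].
  apply fle_meet; [eapply fle_trans; [apply fle_meet_l|apply fle_meet_r]|].
  eapply fle_trans; [|apply (fimp_elim a b)].
  apply fmeet_mono; auto using fle_meet_l, fle_refl.
Qed.

End FrameTheory.

Lemma frame_hom_id (L : Frame) : frame_hom (fun x : L => x).
Proof.
  split; [|split]; auto; intros S; f_equal.
  apply functional_extensionality; intros v; apply propositional_extensionality.
  split; [intros Hv; eauto|intros [s [Hs ->]]; exact Hs].
Qed.

Lemma frame_hom_comp (L1 L2 L3 : Frame) (f : L1 -> L2) (g : L2 -> L3) :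
  frame_hom f -> frame_hom g -> frame_hom (fun x => g (f x)).
Proof.
  intros (f1 & f2 & f3) (g1 & g2 & g3); split; [|split].
  - intros; rewrite f1, g1; reflexivity.
  - rewrite f2, g2; reflexivity.
  - intros S; rewrite f3, g3; f_equal.
    apply functional_extensionality; intros v; apply propositional_extensionality; split.
    + intros [w [[s [Hs ->]] ->]]; eauto.
    + intros [s [Hs ->]]; eauto.
Qed.

Lemma frame_hom_mono (L1 L2 : Frame) (f : L1 -> L2) a b :
  frame_hom f -> fle a b -> fle (f a) (f b).
Proof. intros [f1 _] Hab; rewrite <- (fmeet_l _ _ Hab), f1; apply fle_meet_r. Qed.

Lemma bigmeet_hom (L1 L2 : Frame) (H : L1 -> L2) (f : nat -> L1) j :
  frame_hom H -> H (bigmeet f j) = bigmeet (fun i => H (f i)) j.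
Proof. intros (Hmeet & Htop & _); induction j; simpl; rewrite ?Hmeet, ?IHj; auto. Qed.

Lemma bigmeet_ext (L : Frame) (f g : nat -> L) j :
  (forall i, i < j -> f i = g i) -> bigmeet f j = bigmeet g j.
Proof. induction j; simpl; intros H; auto; rewrite IHj, H; auto. Qed.

Section Partitions.
Context {L : Frame}.
Implicit Types a b c d : L.

Lemma partition_nonbot (Q : L -> Prop) :
  (forall c d, Q c -> Q d -> c <> d -> fmeet c d = fbot) -> fjoin Q = ftop ->
  partition (fun c => Q c /\ c <> fbot).
Proof.
  intros Hdisj Hcover; split; [|split].
  - intros c [_ Hc]; exact Hc.
  - intros c d [Hc _] [Hd _]; auto.
  - apply ftop_le_eq; rewrite <- Hcover; apply fjoin_lub; intros c Hc.
    destruct (classic (c = fbot)) as [-> | Hnz]; [apply fbot_min|].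
    apply fjoin_ub; auto.
Qed.

Lemma partition_add_compl (Q : L -> Prop) c : complemented c ->
  (forall p q, Q p -> Q q -> p <> q -> fmeet p q = fbot) -> fjoin Q = c ->
  partition (fun p => (Q p \/ p = fneg c) /\ p <> fbot).
Proof.
  intros Hc Hdisj Hjoin.
  assert (Hout : forall p, Q p -> fmeet p (fneg c) = fbot).
  { intros p Hp; apply (fmeet_bot_mono (fmeet_fneg c)); [|apply fle_refl].
    rewrite <- Hjoin; apply fjoin_ub, Hp. }
  apply partition_nonbot.
  - intros p q [Hp | ->] [Hq | ->] Hpq; auto.
    + rewrite fmeet_comm; auto.
    + congruence.
  - apply ftop_le_eq; apply complemented_iff in Hc; rewrite <- Hc.
    apply fjoin2_lub; [rewrite <- Hjoin|]; [apply fjoin_lub; intros p Hp|];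
      apply fjoin_ub; auto.
Qed.

Lemma partition_compl d : complemented d ->
  partition (fun p => (p = d \/ p = fneg d) /\ p <> fbot).
Proof.
  intros Hd; apply partition_add_compl; auto; [intros p q -> -> []; reflexivity|].
  apply fle_antisym; [apply fjoin_lub; intros p ->|apply fjoin_ub]; auto using fle_refl.
Qed.

End Partitions.

Section FreeBJSet.
Context {M : Monad} {L : Frame}.
Implicit Types a b c d : L.
Implicit Types x y z : T1 M -> L.
Implicit Types m n k : T1 M.
Implicit Types X Y : L -> T1 M -> L.

Lemma free_elem_of_disjoint_cover x :
  (forall m m', m <> m' -> fmeet (x m) (x m') = fbot) ->
  fjoin (fun v => exists m, v = x m) = ftop -> free_elem x.
Proof.
  intros Hdisj Hcover; split; [|split]; auto.
  intros m; apply complemented_of_disjoint_cover; auto.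
Qed.

Lemma dirac_same m : dirac L m m = ftop.
Proof. unfold dirac; destruct (excluded_middle_informative (m = m)); congruence. Qed.

Lemma dirac_diff m n : m <> n -> dirac L m n = fbot.
Proof. unfold dirac; destruct (excluded_middle_informative (m = n)); congruence. Qed.

Lemma dirac_free_elem m : free_elem (dirac L m).
Proof.
  apply free_elem_of_disjoint_cover.
  - intros n n' Hnn'; destruct (classic (m = n)) as [<- | Hmn].
    + rewrite (dirac_diff _ _ Hnn'), fmeet_bot_r; reflexivity.
    + rewrite (dirac_diff _ _ Hmn), fmeet_bot_l; reflexivity.
  - apply ftop_le_eq; rewrite <- (dirac_same m) at 1; apply fjoin_ub; eauto.
Qed.

Definition agree_on c x y : Prop := forall k, fmeet c (x k) = fmeet c (y k).

Lemma agree_on_refl c x : agree_on c x x.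
Proof. intros k; reflexivity. Qed.

Lemma agree_on_sym c x y : agree_on c x y -> agree_on c y x.
Proof. intros H k; symmetry; apply H. Qed.

Lemma agree_on_trans c x y z : agree_on c x y -> agree_on c y z -> agree_on c x z.
Proof. intros H1 H2 k; rewrite H1; apply H2. Qed.

Lemma agree_on_bop_l c b x y : fle c b -> agree_on c (bop b x y) x.
Proof.
  intros Hcb k; unfold bop; apply fle_antisym.
  - apply fmeet_join_le; intros s [-> | ->].
    + apply fmeet_mono; auto using fle_refl, fle_meet_r.
    + rewrite (fmeet_bot_mono (fmeet_fneg b)); auto using fbot_min, fle_meet_l.
  - apply fle_meet; [apply fle_meet_l|]; eapply fle_trans; [|apply fjoin2_l].
    apply fmeet_mono; auto using fle_refl.
Qed.

Lemma agree_on_bop_r c b x y : fle c (fneg b) -> agree_on c (bop b x y) y.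
Proof.
  intros Hcb k; unfold bop; apply fle_antisym.
  - apply fmeet_join_le; intros s [-> | ->].
    + rewrite (fmeet_bot_mono (fmeet_fneg_l b)); auto using fbot_min, fle_meet_l.
    + apply fmeet_mono; auto using fle_refl, fle_meet_r.
  - apply fle_meet; [apply fle_meet_l|]; eapply fle_trans; [|apply fjoin2_r].
    apply fmeet_mono; auto using fle_refl.
Qed.

Lemma agree_on_dirac c x m : free_elem x -> fle c (x m) -> agree_on c (dirac L m) x.
Proof.
  intros [_ [Hdisj _]] Hc k; destruct (classic (m = k)) as [<- | Hmk].
  - rewrite dirac_same, fmeet_top_r, fmeet_l; auto.
  - rewrite dirac_diff, fmeet_bot_r by auto; symmetry.
    apply (fmeet_bot_mono (Hdisj m k Hmk)); auto using fle_refl.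
Qed.

Lemma Pop_le (P : L -> Prop) X k (z : L) :
  (forall c, P c -> fle (fmeet c (X c k)) z) -> fle (Pop P X k) z.
Proof. intros H; apply fjoin_lub; intros v [c [Hc ->]]; auto. Qed.

Lemma le_Pop (P : L -> Prop) X k c : P c -> fle (fmeet c (X c k)) (Pop P X k).
Proof. intros; apply fjoin_ub; eauto. Qed.

Lemma Pop_ext (P : L -> Prop) X Y :
  (forall c, P c -> agree_on c (X c) (Y c)) -> Pop P X = Pop P Y.
Proof.
  intros H; apply functional_extensionality; intros k; unfold Pop; f_equal.
  apply functional_extensionality; intros v; apply propositional_extensionality.
  split; intros [c [Hc ->]]; exists c; rewrite (H c Hc); auto.
Qed.

Lemma agree_on_Pop (P : L -> Prop) X c d : partition P -> P c -> fle d c ->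
  agree_on d (Pop P X) (X c).
Proof.
  intros [_ [Hdisj _]] Hc Hdc k; apply fle_antisym.
  - apply fmeet_join_le; intros v [c' [Hc' ->]].
    destruct (classic (c' = c)) as [-> | Hne].
    + apply fmeet_mono; auto using fle_refl, fle_meet_r.
    + rewrite (fmeet_bot_mono (Hdisj c c' Hc Hc' (not_eq_sym Hne)));
        auto using fbot_min, fle_meet_l.
  - apply fle_meet; [apply fle_meet_l|]; eapply fle_trans; [|apply (le_Pop P X k c Hc)].
    apply fmeet_mono; auto using fle_refl.
Qed.

Lemma Pop_const (P : L -> Prop) x : partition P -> Pop P (fun _ => x) = x.
Proof.
  intros HP; apply functional_extensionality; intros k; apply fle_antisym.
  - apply Pop_le; intros; apply fle_meet_r.
  - destruct HP as [_ [_ Hcover]].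
    rewrite <- (fmeet_top_r (x k)), <- Hcover, fmeet_comm; apply fjoin_meet_le.
    intros c Hc; apply (le_Pop P (fun _ => x) k c Hc).
Qed.

Lemma Pop_free_elem (P : L -> Prop) X : partition P ->
  (forall c, P c -> free_elem (X c)) -> free_elem (Pop P X).
Proof.
  intros HP HX; apply free_elem_of_disjoint_cover.
  - intros m m' Hmm'; apply fle_bot_eq; apply fjoin_meet_le; intros v [c [Hc ->]].
    apply fmeet_join_le; intros v [d [Hd ->]].
    destruct (classic (c = d)) as [<- | Hcd].
    + destruct (HX c Hc) as [_ [Hdisj _]]; rewrite <- (Hdisj m m' Hmm').
      apply fmeet_mono; apply fle_meet_r.
    + destruct HP as [_ [Hdisj _]]; rewrite <- (Hdisj c d Hc Hd Hcd).
      apply fmeet_mono; apply fle_meet_l.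
  - apply ftop_le_eq; destruct HP as [_ [_ Hcover]]; rewrite <- Hcover at 1.
    apply fjoin_lub; intros c Hc; destruct (HX c Hc) as [_ [_ HXcover]].
    rewrite <- (fmeet_top_r c), <- HXcover; apply fmeet_join_le; intros s [m ->].
    apply (fle_join _ _ (Pop P X m)); eauto using le_Pop.
Qed.

Lemma partition_meets x y : free_elem x -> free_elem y ->
  partition (fun c => (exists m n, c = fmeet (x m) (y n)) /\ c <> fbot).
Proof.
  intros [_ [Hxdisj Hxcover]] [_ [Hydisj Hycover]]; apply partition_nonbot.
  - intros c d [m [n ->]] [m' [n' ->]] Hne.
    destruct (classic (m = m')) as [<- | Hm].
    + destruct (classic (n = n')) as [<- | Hn]; [congruence|].
      apply (fmeet_bot_mono (Hydisj n n' Hn)); apply fle_meet_r.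
    + apply (fmeet_bot_mono (Hxdisj m m' Hm)); apply fle_meet_l.
  - apply ftop_le_eq; rewrite <- Hxcover; apply fjoin_lub; intros v [m ->].
    rewrite <- (fmeet_top_r (x m)), <- Hycover; apply fmeet_join_le; intros s [n ->].
    apply fjoin_ub; eauto.
Qed.

End FreeBJSet.

Section Congruence.
Context {M : Monad} {L : Frame}.
Implicit Types a b c d : L.
Implicit Types x y z : T1 M -> L.
Variable R : (T1 M -> L) -> (T1 M -> L) -> Prop.
Hypothesis HR : is_congruence R.

Lemma cong_free_elem_r x y : R x y -> free_elem y.
Proof. intros H; apply (proj1 HR x y H). Qed.

Lemma cong_refl x : free_elem x -> R x x.
Proof. apply HR. Qed.

Lemma cong_sym x y : R x y -> R y x.
Proof. apply HR. Qed.

Lemma cong_trans x y z : R x y -> R y z -> R x z.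
Proof. apply HR. Qed.

Lemma cong_of_local (P : L -> Prop) x y : partition P ->
  (forall c, P c -> exists u v, R u v /\ agree_on c u x /\ agree_on c v y) -> R x y.
Proof.
  intros HP Hloc.
  destruct (choice (fun c (uv : (T1 M -> L) * (T1 M -> L)) =>
      P c -> R (fst uv) (snd uv) /\ agree_on c (fst uv) x /\ agree_on c (snd uv) y))
    as [f Hf].
  { intros c; destruct (classic (P c)) as [Hc | Hc].
    - destruct (Hloc c Hc) as [u [v Huv]]; exists (u, v); auto.
    - exists (x, y); tauto. }
  assert (Hxy : R (Pop P (fun c => fst (f c))) (Pop P (fun c => snd (f c)))).
  { destruct HR as (_ & _ & _ & _ & Hpop).
    apply Hpop; [exact HP|intros c Hc; apply Hf, Hc]. }
  rewrite (Pop_ext P (fun c => fst (f c)) (fun _ => x)),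
    (Pop_ext P (fun c => snd (f c)) (fun _ => y)), !Pop_const in Hxy;
    auto; intros c Hc; apply Hf, Hc.
Qed.

Lemma cong_of_compl d x y u v u' v' : complemented d ->
  R u v -> agree_on d u x -> agree_on d v y ->
  R u' v' -> agree_on (fneg d) u' x -> agree_on (fneg d) v' y -> R x y.
Proof.
  intros Hd Huv Hux Hvy Huv' Hux' Hvy'.
  apply (cong_of_local _ x y (partition_compl d Hd)).
  intros c [[-> | ->] _]; [exists u, v|exists u', v']; auto.
Qed.

(* The paper's x ≡_c y in the quotient by R. *)
Definition equiv_on c x y : Prop := R (bop c x y) y.

Lemma equiv_on_antitone c d x y : complemented d -> fle d c ->
  equiv_on c x y -> equiv_on d x y.
Proof.
  intros Hd Hdc Hc; unfold equiv_on.
  apply (cong_of_compl d _ _ _ _ y y Hd Hc); try apply agree_on_refl.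
  - apply (agree_on_trans _ _ x); auto using agree_on_bop_l, agree_on_sym, fle_refl.
  - apply cong_refl, (cong_free_elem_r _ _ Hc).
  - apply agree_on_sym, agree_on_bop_r, fle_refl.
Qed.

Lemma equiv_on_trans c x y z : complemented c ->
  equiv_on c x y -> equiv_on c y z -> equiv_on c x z.
Proof.
  intros Hc Hxy Hyz; unfold equiv_on in *.
  apply (cong_trans _ (bop c y z)); auto.
  apply (cong_of_compl c _ _ _ _ z z Hc Hxy).
  - apply (agree_on_trans _ _ x); auto using agree_on_bop_l, agree_on_sym, fle_refl.
  - apply agree_on_sym, agree_on_bop_l, fle_refl.
  - apply cong_refl, (cong_free_elem_r _ _ Hyz).
  - apply agree_on_sym, agree_on_bop_r, fle_refl.
  - apply agree_on_sym, agree_on_bop_r, fle_refl.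
Qed.

Lemma equiv_on_glue c x y (Q : L -> Prop) : complemented c -> free_elem y ->
  (forall p q, Q p -> Q q -> p <> q -> fmeet p q = fbot) -> fjoin Q = c ->
  (forall p, Q p -> equiv_on p x y) -> equiv_on c x y.
Proof.
  intros Hc Hy Hdisj Hjoin HQ; unfold equiv_on.
  apply (cong_of_local _ _ _ (partition_add_compl Q c Hc Hdisj Hjoin)).
  intros p [[Hp | ->] _].
  - exists (bop p x y), y; split; [apply HQ, Hp|split; [|apply agree_on_refl]].
    assert (Hpc : fle p c) by (rewrite <- Hjoin; apply fjoin_ub, Hp).
    apply (agree_on_trans _ _ x); auto using agree_on_bop_l, agree_on_sym, fle_refl.
  - exists y, y; split; [apply cong_refl, Hy|split; [|apply agree_on_refl]].
    apply agree_on_sym, agree_on_bop_r, fle_refl.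
Qed.

End Congruence.

Section LB0Relations.
Context {M : Monad} {L : Frame}.
Variable gen : MT M bool -> L.
Hypothesis Hrel : LB0_relations gen.

Notation "[ t |-> a ]" := (gen (mapsto t a)).

Lemma mapsto_disjoint {A} (t : MT M A) (a a' : A) :
  a <> a' -> fmeet [t |-> a] [t |-> a'] = fbot.
Proof. apply Hrel. Qed.

Lemma mapsto_bind {A B} (t : MT M A) (u : A -> MT M B) (b : B) :
  [mbind t u |-> b] = fjoin (fun v => exists a, v = fmeet [t |-> a] [mthen t (u a) |-> b]).
Proof. apply Hrel. Qed.

Lemma mthen_then_ret {A B} (t : MT M A) (b : B) :
  mthen (mthen t (mret b)) (mret b) = mthen t (mret b).
Proof.
  unfold mthen; rewrite mbind_assoc; f_equal.
  apply functional_extensionality; intros; rewrite mbind_ret_l; reflexivity.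
Qed.

Lemma mapsto_then_ret {A B} (t : MT M A) (b : B) : [mthen t (mret b) |-> b] = ftop.
Proof. rewrite <- mthen_then_ret; apply Hrel. Qed.

Lemma mapsto_cover {A} (t : MT M A) : fjoin (fun v => exists a, v = [t |-> a]) = ftop.
Proof.
  apply ftop_le_eq; rewrite <- (mapsto_then_ret t tt); unfold mthen at 1.
  rewrite mapsto_bind; apply fjoin_lub; intros v [a ->].
  apply (fle_join _ _ [t |-> a]); eauto using fle_meet_l.
Qed.

Lemma mapsto_complemented {A} (t : MT M A) (a : A) : complemented [t |-> a].
Proof.
  apply (complemented_of_disjoint_cover _ (fun a => [t |-> a])).
  - intros; apply mapsto_disjoint; auto.
  - apply mapsto_cover.
Qed.

Lemma mapsto_true (b : MT M bool) : mapsto b true = b.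
Proof.
  unfold mapsto; rewrite <- (mbind_ret_r b) at 2; f_equal.
  apply functional_extensionality; intros a; unfold delta_bool.
  destruct (excluded_middle_informative (a = true)), a; congruence.
Qed.

Lemma gen_complemented (b : MT M bool) : complemented (gen b).
Proof. rewrite <- (mapsto_true b); apply mapsto_complemented. Qed.

Lemma mapsto_bind_local {A B} (t : MT M A) (u : A -> MT M B) (a : A) (b : B) :
  fle (fmeet [t |-> a] [mbind t u |-> b]) [mthen t (u a) |-> b].
Proof.
  rewrite mapsto_bind; apply fmeet_join_le; intros v [a' ->].
  destruct (classic (a = a')) as [<- | Hne].
  - eapply fle_trans; apply fle_meet_r.
  - rewrite (fmeet_bot_mono (mapsto_disjoint t _ _ Hne)); auto using fbot_min, fle_refl, fle_meet_l.
Qed.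

Lemma Pt_partition {A} (t : MT M A) : partition (Pt gen t).
Proof.
  apply (partition_nonbot (fun c => exists a, c = [t |-> a])).
  - intros c d [a ->] [a' ->] Hne; apply mapsto_disjoint; congruence.
  - apply mapsto_cover.
Qed.

Lemma gen_family_at {A} (t : MT M A) (u : A -> T1 M) (a : A) : [t |-> a] <> fbot ->
  gen_family gen t u [t |-> a] = dirac L (mthen t (u a)).
Proof.
  intros Hnz; apply functional_extensionality; intros k; apply fle_antisym.
  - apply fjoin_lub; intros v [a' [Heq ->]].
    destruct (classic (a = a')) as [<- | Hne]; [apply fle_refl|].
    exfalso; apply Hnz; rewrite <- (mapsto_disjoint t _ _ Hne), <- Heq, fmeet_idem; auto.
  - apply fjoin_ub; eauto.
Qed.

Lemma generator_free_elem {A} (t : MT M A) (u : A -> T1 M) :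
  free_elem (Pop (Pt gen t) (gen_family gen t u)).
Proof.
  apply Pop_free_elem; [apply Pt_partition|].
  intros c [[a ->] Hnz]; rewrite gen_family_at; auto using dirac_free_elem.
Qed.

Lemma agree_on_generator {A} (t : MT M A) (u : A -> T1 M) (a : A) (c : L) :
  fle c [t |-> a] ->
  agree_on c (Pop (Pt gen t) (gen_family gen t u)) (dirac L (mthen t (u a))).
Proof.
  intros Hc; destruct (classic ([t |-> a] = fbot)) as [Hz | Hnz].
  - assert (c = fbot) as -> by (apply fle_bot_eq; rewrite <- Hz; auto).
    intros k; rewrite !fmeet_bot_l; reflexivity.
  - rewrite <- gen_family_at by auto.
    apply agree_on_Pop; auto using Pt_partition; split; eauto.
Qed.

Lemma equiv_on_generator (R : (T1 M -> L) -> (T1 M -> L) -> Prop) :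
  is_congruence R -> contains_generators gen R ->
  forall A (t : MT M A) (u u' : A -> T1 M) (a : A) (c : L),
  complemented c -> fle c [t |-> a] -> u a = u' a ->
  equiv_on R c (dirac L (mbind t u)) (dirac L (mbind t u')).
Proof.
  intros HR HG A t u u' a c Hc Hca Hu; unfold equiv_on.
  apply (cong_trans R HR _ (Pop (Pt gen t) (gen_family gen t u')));
    [|apply cong_sym, HG; auto].
  apply (cong_of_compl R HR c _ _ _ _ (dirac L (mbind t u'))
           (Pop (Pt gen t) (gen_family gen t u')) Hc (HG _ t u)).
  - apply agree_on_sym, agree_on_bop_l, fle_refl.
  - apply (agree_on_trans _ _ (dirac L (mthen t (u a)))); [apply agree_on_generator, Hca|].
    rewrite Hu; apply agree_on_sym, agree_on_generator, Hca.
  - apply (HG _ t u').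
  - apply agree_on_sym, agree_on_bop_r, fle_refl.
  - apply agree_on_refl.
Qed.

End LB0Relations.

Section Sieves.
Context {L : Frame}.
Implicit Types a b c d e p q : L.

Definition sieve_closed (D : L -> Prop) : Prop :=
  (forall c, D c -> complemented c) /\
  (forall c d, D c -> complemented d -> fle d c -> D d) /\
  (forall c (Q : L -> Prop), complemented c ->
     (forall p q, Q p -> Q q -> p <> q -> fmeet p q = fbot) -> fjoin Q = c ->
     (forall p, Q p -> D p) -> D c).

Definition sieve_closure (S : L -> Prop) (c : L) : Prop :=
  forall D, sieve_closed D -> (forall s, S s -> complemented s -> D s) -> D c.

Lemma sieve_closed_complemented : sieve_closed (@complemented L).
Proof. split; [|split]; auto. Qed.

Lemma sieve_closed_below e : sieve_closed (fun c => complemented c /\ fle c e).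
Proof.
  split; [|split].
  - intros c [Hc _]; exact Hc.
  - intros c d [_ Hce] Hd Hdc; split; eauto using fle_trans.
  - intros c Q Hc _ Hjoin HQ; split; auto.
    rewrite <- Hjoin; apply fjoin_lub; intros p Hp; apply HQ, Hp.
Qed.

Lemma sieve_closed_bot D : sieve_closed D -> D fbot.
Proof.
  intros (_ & _ & Hjoin); apply (Hjoin fbot (fun _ => False));
    auto using complemented_bot, fjoin_empty; tauto.
Qed.

Lemma sieve_closure_min S D : sieve_closed D ->
  (forall s, S s -> complemented s -> D s) -> forall c, sieve_closure S c -> D c.
Proof. intros HD HS c Hc; apply Hc; auto. Qed.

Lemma sieve_closure_incl S s : S s -> complemented s -> sieve_closure S s.
Proof. intros Hs Hcs D _ HS; auto. Qed.

Lemma sieve_closure_closed S : sieve_closed (sieve_closure S).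
Proof.
  split; [|split].
  - intros c; apply sieve_closure_min; [apply sieve_closed_complemented|auto].
  - intros c d Hc Hd Hdc D HD HS; apply (proj1 (proj2 HD) c); auto; apply Hc; auto.
  - intros c Q Hc Hdisj Hjoin HQ D HD HS; apply (proj2 (proj2 HD) c Q); auto.
    intros p Hp; apply HQ; auto.
Qed.

Lemma sieve_closure_mono S S' : (forall s, S s -> complemented s -> S' s) ->
  forall c, sieve_closure S c -> sieve_closure S' c.
Proof.
  intros H; apply sieve_closure_min; [apply sieve_closure_closed|].
  intros; apply sieve_closure_incl; auto.
Qed.

Lemma sieve_closure_le S c : sieve_closure S c -> fle c (fjoin S).
Proof.
  intros Hc; apply (sieve_closure_min S _ (sieve_closed_below (fjoin S))); auto.
  intros s Hs Hcs; split; auto; apply fjoin_ub, Hs.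
Qed.

(* The c all of whose complemented parts in B lie in the closure of U ∧ B form a
   closed sieve containing U. *)
Lemma sieve_closure_meet U B : sieve_closed B ->
  (forall c d, U c -> complemented d -> fle d c -> U d) ->
  forall c, sieve_closure U c -> B c -> sieve_closure (fun e => U e /\ B e) c.
Proof.
  intros HB HU.
  set (D := fun c => complemented c /\
         forall d, complemented d -> fle d c -> B d -> sieve_closure (fun e => U e /\ B e) d).
  assert (HD : sieve_closed D).
  { split; [|split].
    - intros c [Hc _]; exact Hc.
    - intros c d [_ Hc] Hd Hdc; split; auto.
      intros e He Hed HBe; apply Hc; eauto using fle_trans.
    - intros c Q Hc Hdisj Hjoin HQ; split; auto; intros d Hd Hdc HBd.
      apply (proj2 (proj2 (sieve_closure_closed _)) d (fun v => exists s, Q s /\ v = fmeet d s));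
        auto.
      + intros p q [s [Hs ->]] [s' [Hs' ->]] Hne.
        assert (Hss' : s <> s') by (intros ->; auto).
        apply (fmeet_bot_mono (Hdisj s s' Hs Hs' Hss')); apply fle_meet_r.
      + rewrite <- fdistr, Hjoin; apply fmeet_l, Hdc.
      + intros p [s [Hs ->]]; destruct (HQ s Hs) as [Hcs Hs2].
        assert (Hds : complemented (fmeet d s)) by (apply complemented_meet; auto).
        apply Hs2; auto using fle_meet_r.
        apply (proj1 (proj2 HB) d); auto using fle_meet_l. }
  intros c Hc HBc.
  assert (HDc : D c).
  { apply (sieve_closure_min U _ HD); auto; intros s Hs Hcs; split; auto.
    intros d Hd Hds HBd; apply sieve_closure_incl; eauto. }
  destruct HDc as [Hcc HDc]; apply HDc; auto using fle_refl.
Qed.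

Definition closed_sieve : Type := { D : L -> Prop | sieve_closed D }.

Definition in_sieve (D : closed_sieve) (c : L) : Prop := proj1_sig D c.

Lemma closed_sieve_ext (D E : closed_sieve) :
  (forall c, in_sieve D c <-> in_sieve E c) -> D = E.
Proof.
  destruct D as [D HD], E as [E HE]; unfold in_sieve; simpl; intros H.
  assert (D = E) as ->.
  { apply functional_extensionality; intros c; apply propositional_extensionality; auto. }
  f_equal; apply proof_irrelevance.
Qed.

Definition sieve_le (D E : closed_sieve) : Prop := forall c, in_sieve D c -> in_sieve E c.

Lemma sieve_closed_meet D E : sieve_closed D -> sieve_closed E ->
  sieve_closed (fun c => D c /\ E c).
Proof.
  intros (D1 & D2 & D3) (E1 & E2 & E3); split; [|split].
  - intros c [Hc _]; auto.
  - intros c d [HDc HEc] Hd Hdc; split; eauto.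
  - intros c Q Hc Hdisj Hjoin HQ; split;
      [apply (D3 c Q)|apply (E3 c Q)]; auto; intros p Hp; apply HQ, Hp.
Qed.

Lemma sieve_closed_singleton_bot : sieve_closed (fun c : L => c = fbot).
Proof.
  split; [|split].
  - intros c ->; apply complemented_bot.
  - intros c d -> _; apply fle_bot_eq.
  - intros c Q _ _ Hjoin HQ; subst c; apply fle_bot_eq, fjoin_lub.
    intros p Hp; rewrite (HQ p Hp); apply fle_refl.
Qed.

Definition sieve_meet (D E : closed_sieve) : closed_sieve :=
  exist _ (fun c => in_sieve D c /\ in_sieve E c)
    (sieve_closed_meet _ _ (proj2_sig D) (proj2_sig E)).

Definition sieve_join (SS : closed_sieve -> Prop) : closed_sieve :=
  exist _ (sieve_closure (fun c => exists D, SS D /\ in_sieve D c)) (sieve_closure_closed _).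

Definition sieve_top : closed_sieve := exist _ (@complemented L) sieve_closed_complemented.

Definition sieve_bot : closed_sieve := exist _ (fun c => c = fbot) sieve_closed_singleton_bot.

Lemma in_sieve_complemented (D : closed_sieve) c : in_sieve D c -> complemented c.
Proof. apply (proj2_sig D). Qed.

Lemma in_sieve_down (D : closed_sieve) c d :
  in_sieve D c -> complemented d -> fle d c -> in_sieve D d.
Proof. apply (proj2_sig D). Qed.

Lemma sieve_join_ub (SS : closed_sieve -> Prop) D : SS D -> sieve_le D (sieve_join SS).
Proof. intros HD c Hc; apply sieve_closure_incl; eauto using in_sieve_complemented. Qed.

Lemma sieve_join_lub (SS : closed_sieve -> Prop) E :
  (forall D, SS D -> sieve_le D E) -> sieve_le (sieve_join SS) E.
Proof.
  intros H c; apply (sieve_closure_min _ _ (proj2_sig E)).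
  intros s [D [HD Hs]] _; apply (H D HD), Hs.
Qed.

Lemma sieve_distr D (SS : closed_sieve -> Prop) :
  sieve_meet D (sieve_join SS) =
  sieve_join (fun V => exists S, SS S /\ V = sieve_meet D S).
Proof.
  apply closed_sieve_ext; intros c; split.
  - intros [HDc HJc].
    refine (sieve_closure_mono _ _ _ c
              (sieve_closure_meet _ _ (proj2_sig D) _ c HJc HDc)).
    + intros s [[S [HS Hs]] HDs] _; exists (sieve_meet D S); split; [eauto|split; auto].
    + intros c' d' [S [HS Hs]] Hd Hle; exists S; split; eauto using in_sieve_down.
  - intros Hc; split.
    + revert c Hc; apply (sieve_closure_min _ _ (proj2_sig D)).
      intros s [V [[S [HS ->]] [Hs _]]] _; exact Hs.
    + refine (sieve_closure_mono _ _ _ c Hc).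
      intros s [V [[S [HS ->]] [_ Hs]]] _; eauto.
Qed.

Definition sieve_frame : Frame.
Proof.
  refine {| fc := closed_sieve; fle := sieve_le; fmeet := sieve_meet; fjoin := sieve_join;
            ftop := sieve_top; fbot := sieve_bot; fdistr := sieve_distr |}.
  - intros D c; auto.
  - intros D E G H1 H2 c Hc; auto.
  - intros D E H1 H2; apply closed_sieve_ext; split; auto.
  - intros D E G; split; [intros H; split; intros c Hc; apply H; auto|].
    intros [H1 H2] c Hc; split; auto.
  - apply sieve_join_ub.
  - apply sieve_join_lub.
  - intros D c; apply in_sieve_complemented.
  - intros D c Hc; rewrite Hc; apply sieve_closed_bot, (proj2_sig D).
Defined.

Definition principal_sieve (e : L) : sieve_frame :=
  exist _ (fun c => complemented c /\ fle c e) (sieve_closed_below e).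

End Sieves.

Section SieveModel.
Context {M : Monad} {L : Frame}.
Variable gen : MT M bool -> L.
Hypothesis Hlb : is_LB0 gen.
Let Hrel : LB0_relations gen := proj1 Hlb.

Notation "[ t |-> a ]" := (gen (mapsto t a)).

Lemma principal_sieve_disjoint {A} (t : MT M A) (a a' : A) : a <> a' ->
  fmeet (principal_sieve [t |-> a]) (principal_sieve [t |-> a']) = fbot.
Proof.
  intros Hne; apply closed_sieve_ext; intros c; split.
  - intros [[Hc Hca] [_ Hca']]; apply fle_bot_eq.
    rewrite <- (mapsto_disjoint gen Hrel t a a' Hne); apply fle_meet; auto.
  - intros Hc; simpl in Hc; subst c.
    split; split; auto using complemented_bot, fbot_min.
Qed.

Lemma principal_sieve_then_ret {A} (t : MT M A) (a : A) :
  principal_sieve [mthen t (mret a) |-> a] = ftop.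
Proof.
  apply closed_sieve_ext; intros c; simpl.
  rewrite (mapsto_then_ret gen Hrel); split; [intros [Hc _]; exact Hc|].
  split; auto using ftop_max.
Qed.

(* A complemented c below [t >>= u |-> b] is the disjoint join of its parts
   c ∧ [t |-> a], each of which lies below [t >> u a |-> b]. *)
Lemma principal_sieve_bind {A B} (t : MT M A) (u : A -> MT M B) (b : B) :
  principal_sieve [mbind t u |-> b] =
  fjoin (fun v => exists a, v = fmeet (principal_sieve [t |-> a])
                                       (principal_sieve [mthen t (u a) |-> b])).
Proof.
  apply closed_sieve_ext; intros c; split.
  - intros [Hc Hcb].
    apply (proj2 (proj2 (sieve_closure_closed _)) c (fun q => exists a, q = fmeet c [t |-> a]));
      auto.
    + intros p q [a ->] [a' ->] Hne; assert (Haa' : a <> a') by (intros ->; auto).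
      apply (fmeet_bot_mono (mapsto_disjoint gen Hrel t a a' Haa')); apply fle_meet_r.
    + transitivity (fmeet c (fjoin (fun v => exists a, v = [t |-> a])));
        [|rewrite (mapsto_cover gen Hrel t); apply fmeet_top_r].
      rewrite fdistr; f_equal; apply functional_extensionality; intros v.
      apply propositional_extensionality; split.
      * intros [a ->]; eauto.
      * intros [s [[a ->] ->]]; eauto.
    + intros p [a ->].
      assert (Hp : complemented (fmeet c [t |-> a]))
        by (apply complemented_meet; auto using mapsto_complemented).
      apply sieve_closure_incl; auto.
      exists (sieve_meet (principal_sieve [t |-> a]) (principal_sieve [mthen t (u a) |-> b])).
      split; [exists a; reflexivity|split; split; auto using fle_meet_r].
      eapply fle_trans; [|apply (mapsto_bind_local gen Hrel t u a b)].
      apply fle_meet; [apply fle_meet_r|eapply fle_trans; [apply fle_meet_l|exact Hcb]].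
  - revert c; apply (sieve_closure_min _ _ (sieve_closed_below _)).
    intros s [D [[a ->] [[Hs Hsa] [_ Hsb]]]] _; split; auto.
    rewrite (mapsto_bind gen Hrel).
    apply (fle_join _ _ (fmeet [t |-> a] [mthen t (u a) |-> b])); eauto using fle_meet.
Qed.

Lemma principal_sieve_LB0_relations :
  LB0_relations (fun b => principal_sieve (gen b)).
Proof.
  split; [|split]; intros.
  - apply principal_sieve_disjoint; auto.
  - apply principal_sieve_then_ret.
  - apply principal_sieve_bind.
Qed.

Definition sieve_sup (D : @sieve_frame L) : L := fjoin (in_sieve D).

Lemma sieve_sup_hom : frame_hom sieve_sup.
Proof.
  split; [|split].
  - intros D E; apply fle_antisym.
    + apply fjoin_lub; intros c [HDc HEc]; apply fle_meet; apply fjoin_ub; auto.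
    + apply fjoin_meet_le; intros d Hd; apply fmeet_join_le; intros e He.
      apply fjoin_ub; split;
        [apply (in_sieve_down D d)|apply (in_sieve_down E e)];
        eauto using complemented_meet, in_sieve_complemented, fle_meet_l, fle_meet_r.
  - apply ftop_le_eq, fjoin_ub, complemented_iff, ftop_le_eq, fjoin2_l.
  - intros SS; apply fle_antisym.
    + apply fjoin_lub; intros c Hc; eapply fle_trans; [apply (sieve_closure_le _ _ Hc)|].
      apply fjoin_lub; intros d [D [HD Hd]].
      apply (fle_join _ _ (sieve_sup D)); [eauto|apply fjoin_ub, Hd].
    + apply fjoin_lub; intros v [D [HD ->]]; apply fjoin_lub; intros c Hc.
      apply fjoin_ub, sieve_closure_incl; eauto using in_sieve_complemented.
Qed.

Section Embedding.
Variable h : L -> @sieve_frame L.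
Hypothesis Hh : frame_hom h.
Hypothesis Hgen : forall b, h (gen b) = principal_sieve (gen b).

Lemma sieve_sup_embedding x : sieve_sup (h x) = x.
Proof.
  destruct (proj2 Hlb L gen Hrel) as [h0 [_ Huniq]].
  rewrite (Huniq (fun x => sieve_sup (h x))), <- (Huniq (fun x => x));
    auto using frame_hom_id, frame_hom_comp, sieve_sup_hom.
  intros b; rewrite Hgen; apply fle_antisym.
  - apply fjoin_lub; intros c [_ Hc]; exact Hc.
  - apply fjoin_ub; split; auto using gen_complemented, fle_refl.
Qed.

Lemma in_embedding_le x c : in_sieve (h x) c -> fle c x.
Proof. intros Hc; rewrite <- (sieve_sup_embedding x); apply fjoin_ub, Hc. Qed.

(* Since c ∨ ¬c = ⊤, c is covered by pieces of h c and h (¬c); the pieces below c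
   that come from h (¬c) are ⊥. *)
Lemma in_embedding_self c : complemented c -> in_sieve (h c) c.
Proof.
  intros Hc; destruct Hh as (_ & Htop & Hjoin).
  assert (Hcover : in_sieve (h (fjoin2 c (fneg c))) c)
    by (rewrite (proj1 (complemented_iff c) Hc), Htop; exact Hc).
  unfold fjoin2 in Hcover; rewrite Hjoin in Hcover.
  refine (sieve_closure_min _ _ (proj2_sig (h c)) _ c
            (sieve_closure_meet _ _ (sieve_closed_below c) _ c Hcover (conj Hc (fle_refl c)))).
  - intros s [[D [[s' [[-> | ->] ->]] HDs]] [_ Hsc]] Hs; [exact HDs|].
    assert (s = fbot) as ->.
    { apply fle_bot_eq; rewrite <- (fmeet_fneg c); apply fle_meet; auto.
      apply (in_embedding_le _ _ HDs). }
    apply sieve_closed_bot, (proj2_sig (h c)).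
  - intros c' d' [D [HD Hc']] Hd Hle; exists D; split; eauto using in_sieve_down.
Qed.

End Embedding.
End SieveModel.

Section Traces.
Context {M : Monad} {L : Frame}.
Variable K : Type.
Variable gen : MT M bool -> L.
Implicit Types m n k : T1 M.

Local Notation tr1 := (trace1 K gen).
Local Notation tr := (trace K gen).

Lemma hom_trace_le (Fr : Frame) (H : L -> Fr) (z : Fr) m n : frame_hom H ->
  (forall j (s : nat -> T1 M), s 1 = m -> s (S (S j)) = n ->
     fle (bigmeet (fun i => H (tr1 (s (i + 1)) (s (i + 2)))) (S j)) z) ->
  fle (H (tr m n)) z.
Proof.
  intros Hh Hchain; pose proof Hh as (_ & _ & Hjoin).
  unfold trace; rewrite Hjoin; apply fjoin_lub; intros v [w [[k [Hk ->]] ->]].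
  destruct k as [|[|j]]; [lia| |].
  - eapply fle_trans; [|apply (Hchain 0 (fun i => if Nat.eqb i 1 then m else n))];
      auto; simpl; apply fle_meet; auto using ftop_max, fle_refl.
  - cbv delta [tracek] beta iota; rewrite Hjoin.
    apply fjoin_lub; intros v [w [[s [Hs1 [Hs2 ->]]] ->]].
    rewrite (bigmeet_hom _ _ H) by exact Hh; apply Hchain; auto.
Qed.

Lemma trace_least (Fr : Frame) (H : L -> Fr) (G : T1 M -> T1 M -> Fr) :
  frame_hom H ->
  (forall m n, fle (H (tr1 m n)) (G m n)) ->
  (forall m k n, fle (fmeet (G m k) (G k n)) (G m n)) ->
  forall m n, fle (H (tr m n)) (G m n).
Proof.
  intros Hh Hbase Htrans m n; apply hom_trace_le; auto; intros j s <- <-.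
  induction j.
  - eapply fle_trans; [apply fle_meet_r|apply Hbase].
  - change (bigmeet ?f (S (S j))) with (fmeet (bigmeet f (S j)) (f (S j))); cbv beta.
    eapply fle_trans; [|apply (Htrans _ (s (S (S j))))].
    apply fmeet_mono; [apply IHj|].
    replace (S j + 1) with (S (S j)) by lia; replace (S j + 2) with (S (S (S j))) by lia.
    apply Hbase.
Qed.

Lemma chain_le_trace j (s : nat -> T1 M) :
  fle (bigmeet (fun i => tr1 (s (i + 1)) (s (i + 2))) (S j)) (tr (s 1) (s (S (S j)))).
Proof.
  apply (fle_join _ _ (tracek K gen (S (S j)) (s 1) (s (S (S j))))).
  - exists (S (S j)); split; auto; lia.
  - apply fjoin_ub; exists s; auto.
Qed.

Lemma trace1_le_trace m n : fle (tr1 m n) (tr m n).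
Proof. apply (fle_join _ _ (tracek K gen 1 m n)); [exists 1; auto|apply fle_refl]. Qed.

Lemma trace_extend m k n : fle (fmeet (tr m k) (tr1 k n)) (tr m n).
Proof.
  eapply fle_trans; [apply fmeet_mono; [|apply fle_refl]|apply (fimp_elim (tr1 k n))].
  apply (hom_trace_le L (fun x => x)); [apply frame_hom_id|]; intros j s Hs1 Hs2.
  apply fimp_intro.
  set (s' := fun i => if Nat.eqb i (S (S (S j))) then n else s i).
  assert (Hs' : bigmeet (fun i => tr1 (s' (i + 1)) (s' (i + 2))) (S (S j)) =
                fmeet (bigmeet (fun i => tr1 (s (i + 1)) (s (i + 2))) (S j)) (tr1 k n)).
  { change (bigmeet ?f (S (S j))) with (fmeet (bigmeet f (S j)) (f (S j))); cbv beta.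
    f_equal.
    - apply bigmeet_ext; intros i Hi; unfold s'.
      rewrite (proj2 (Nat.eqb_neq (i + 1) _)), (proj2 (Nat.eqb_neq (i + 2) _)) by lia.
      reflexivity.
    - unfold s'; rewrite <- Hs2.
      replace (S j + 1) with (S (S j)) by lia; replace (S j + 2) with (S (S (S j))) by lia.
      rewrite Nat.eqb_refl, (proj2 (Nat.eqb_neq (S (S j)) _)) by lia; reflexivity. }
  pose proof (chain_le_trace (S j) s') as Hchain.
  replace (s' 1) with m in Hchain by (unfold s'; simpl; auto).
  replace (s' (S (S (S j)))) with n in Hchain by (unfold s'; rewrite Nat.eqb_refl; auto).
  rewrite <- Hs'; exact Hchain.
Qed.

(* trace_least applied to the relation (k, n) ↦ ([[m ∼ k]] ⇒ [[m ∼ n]]). *)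
Lemma trace_trans m k n : fle (fmeet (tr m k) (tr k n)) (tr m n).
Proof.
  assert (Himp : fle (tr k n) (fimp (tr m k) (tr m n))).
  { apply (trace_least L (fun x => x) (fun k n => fimp (tr m k) (tr m n)) (frame_hom_id L)).
    - intros k' n'; apply fimp_intro; rewrite fmeet_comm; apply trace_extend.
    - intros; apply fimp_trans. }
  eapply fle_trans; [|apply (fimp_elim (tr m k))].
  rewrite fmeet_comm; apply fmeet_mono; [exact Himp|apply fle_refl].
Qed.

Lemma trace1_sym m n : fle (tr1 m n) (tr1 n m).
Proof.
  apply fjoin_lub; intros v (A & t & u & u' & a & HA & Hu & Hm & Hn & ->).
  apply fjoin_ub; exists A, t, u', u, a; auto.
Qed.

Lemma trace_sym m n : fle (tr m n) (tr n m).
Proof.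
  apply (trace_least L (fun x => x) (fun m n => tr n m) (frame_hom_id L)).
  - intros; eapply fle_trans; [apply trace1_sym|apply trace1_le_trace].
  - intros m' k n'; rewrite fmeet_comm; apply trace_trans.
Qed.

Lemma trace_refl m : LB0_relations gen -> card_le nat K -> tr m m = ftop.
Proof.
  intros Hrel [f _]; apply ftop_le_eq; eapply fle_trans; [|apply trace1_le_trace].
  apply (fle_join _ _ (gen (mapsto (mret tt : T1 M) tt))).
  - exists unit, (mret tt), (fun _ => m), (fun _ => m), tt.
    repeat split; [|rewrite mbind_ret_l; reflexivity..].
    exists (fun _ => f 0); intros [] [] _; reflexivity.
  - rewrite <- (mapsto_then_ret gen Hrel (mret tt : T1 M) tt) at 1.
    unfold mthen; rewrite mbind_ret_l; apply fle_refl.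
Qed.

End Traces.

Section Main.
Context {M : Monad} {L : Frame}.
Variable K : Type.
Variable gen : MT M bool -> L.
Hypothesis Hrank : ranked_of_rank M K.
Hypothesis Hlb : is_LB0 gen.
Let Hrel : LB0_relations gen := proj1 Hlb.
Implicit Types m n k : T1 M.
Implicit Types x y : T1 M -> L.

Notation "[ t |-> a ]" := (gen (mapsto t a)).

(* The rank lets us rewrite t through an index set of size < K, as trace1 requires. *)
Lemma mapsto_le_trace1 {A} (t : MT M A) (u : A -> T1 M) (a : A) :
  fle [t |-> a] (trace1 K gen (mbind t u) (mthen t (u a))).
Proof.
  destruct (proj2 Hrank A t) as (I & t' & f & [HI _] & ->).
  rewrite (mapsto_bind gen Hrel); apply fjoin_lub; intros v [i ->].
  destruct (classic (f i = a)) as [<- | Hfi].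
  - eapply fle_trans; [apply fle_meet_l|]; apply fjoin_ub.
    exists I, t', (fun i => u (f i)), (fun _ => u (f i)), i.
    repeat split; auto; unfold mthen; rewrite mbind_assoc; f_equal;
      apply functional_extensionality; intros; rewrite mbind_ret_l; reflexivity.
  - assert (Hbot : [mthen t' (mret (f i)) |-> a] = fbot).
    { rewrite <- (fmeet_top_r [mthen t' (mret (f i)) |-> a]),
        <- (mapsto_then_ret gen Hrel t' (f i)).
      apply mapsto_disjoint; auto. }
    rewrite Hbot, fmeet_bot_r; apply fbot_min.
Qed.

Definition trace_related x y : Prop :=
  free_elem x /\ free_elem y /\
  forall m n, fle (fmeet (x m) (y n)) (trace K gen m n).

Lemma trace_related_refl x : free_elem x -> trace_related x x.
Proof.
  intros Hx; split; [|split]; auto; intros m n.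
  destruct (classic (m = n)) as [<- | Hmn].
  - rewrite (trace_refl K gen m Hrel (proj1 (proj1 Hrank))); apply ftop_max.
  - destruct Hx as [_ [Hdisj _]]; rewrite (Hdisj m n Hmn); apply fbot_min.
Qed.

Lemma trace_related_sym x y : trace_related x y -> trace_related y x.
Proof.
  intros (Hx & Hy & Hxy); split; [|split]; auto; intros m n.
  rewrite fmeet_comm; eapply fle_trans; [apply Hxy|apply trace_sym].
Qed.

Lemma trace_related_trans x y z :
  trace_related x y -> trace_related y z -> trace_related x z.
Proof.
  intros (Hx & Hy & Hxy) (_ & Hz & Hyz); split; [|split]; auto; intros m n.
  destruct Hy as (_ & _ & Hcover).
  rewrite <- (fmeet_top_r (fmeet (x m) (z n))), <- Hcover.
  apply fmeet_join_le; intros s [k ->].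
  eapply fle_trans; [|apply (trace_trans K gen m k n)]; apply fle_meet.
  - eapply fle_trans; [|apply (Hxy m k)]; apply fmeet_mono; auto using fle_meet_l, fle_refl.
  - eapply fle_trans; [|apply (Hyz k n)]; apply fle_meet; [apply fle_meet_r|].
    eapply fle_trans; [apply fle_meet_l|apply fle_meet_r].
Qed.

Lemma trace_related_Pop (P : L -> Prop) (X Y : L -> T1 M -> L) : partition P ->
  (forall c, P c -> trace_related (X c) (Y c)) -> trace_related (Pop P X) (Pop P Y).
Proof.
  intros HP HXY; split; [|split];
    try (apply Pop_free_elem; auto; intros c Hc; apply (HXY c Hc)).
  intros m n; apply fjoin_meet_le; intros v [c [Hc ->]].
  apply fmeet_join_le; intros v [d [Hd ->]].
  destruct (classic (c = d)) as [<- | Hcd].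
  - eapply fle_trans; [|apply (proj2 (proj2 (HXY c Hc)) m n)].
    apply fmeet_mono; apply fle_meet_r.
  - destruct HP as [_ [Hdisj _]]; rewrite (fmeet_bot_mono (Hdisj c d Hc Hd Hcd));
      auto using fbot_min, fle_meet_l.
Qed.

Lemma trace_related_congruence : is_congruence trace_related.
Proof.
  split; [intros x y (Hx & Hy & _); auto|].
  split; [exact trace_related_refl|].
  split; [exact trace_related_sym|].
  split; [exact trace_related_trans|exact trace_related_Pop].
Qed.

Lemma trace_related_generators : contains_generators gen trace_related.
Proof.
  intros A t u; split; [|split]; auto using dirac_free_elem, generator_free_elem; intros m n.
  destruct (classic (mbind t u = m)) as [<- | Hm];
    [|rewrite dirac_diff, fmeet_bot_l; auto using fbot_min].
  rewrite dirac_same, fmeet_comm, fmeet_top_r; apply Pop_le; intros c [[a ->] Hnz].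
  rewrite gen_family_at by auto.
  destruct (classic (mthen t (u a) = n)) as [<- | Hn].
  - rewrite dirac_same, fmeet_top_r.
    eapply fle_trans; [apply mapsto_le_trace1|apply trace1_le_trace].
  - rewrite dirac_diff, fmeet_bot_r; auto using fbot_min.
Qed.

Lemma approx_trace_related x y : approx gen x y -> trace_related x y.
Proof. intros H; apply H; auto using trace_related_congruence, trace_related_generators. Qed.

Section Generated.
Variable R : (T1 M -> L) -> (T1 M -> L) -> Prop.
Hypothesis HR : is_congruence R.
Hypothesis HG : contains_generators gen R.

Lemma equiv_on_sieve_closed m n :
  sieve_closed (fun c => complemented c /\ equiv_on R c (dirac L m) (dirac L n)).
Proof.
  split; [|split].
  - intros c [Hc _]; exact Hc.
  - intros c d [Hc Hmn] Hd Hdc; split; auto; apply (equiv_on_antitone R HR c); auto.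
  - intros c Q Hc Hdisj Hjoin HQ; split; auto.
    apply (equiv_on_glue R HR c _ _ Q); auto using dirac_free_elem.
    intros p Hp; apply HQ, Hp.
Qed.

Lemma equiv_on_of_le_trace m n c : complemented c -> fle c (trace K gen m n) ->
  equiv_on R c (dirac L m) (dirac L n).
Proof.
  intros Hc Hle.
  destruct (proj2 Hlb _ _ (principal_sieve_LB0_relations gen Hlb)) as [h [[Hh Hgen] _]].
  set (E := fun m n => exist _ _ (equiv_on_sieve_closed m n) : @sieve_frame L).
  assert (HE : fle (h (trace K gen m n)) (E m n)).
  { apply trace_least; auto.
    - intros m' n' e He; pose proof Hh as (_ & _ & Hjoin).
      unfold trace1 in He; rewrite Hjoin in He; revert e He.
      apply (sieve_closure_min _ _ (proj2_sig (E m' n'))).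
      intros s [D [[w [(A & t & u & u' & a & _ & Hu & -> & -> & ->) ->]] Hs]] Hcs.
      rewrite Hgen in Hs; destruct Hs as [_ Hsa]; split; auto.
      apply (equiv_on_generator gen Hrel R HR HG A t u u' a s); auto.
    - intros m' k' n' e [[He Hmk] [_ Hkn]]; split; auto.
      apply (equiv_on_trans R HR e _ (dirac L k')); auto. }
  apply (HE c), (frame_hom_mono _ _ h _ _ Hh Hle c), (in_embedding_self gen Hlb h Hh Hgen c Hc).
Qed.

End Generated.

Lemma approx_bop_dirac_iff_trace_eq m n b : complemented b ->
  (approx gen (bop b (dirac L m) (dirac L n)) (dirac L n) <-> trace_eq_b K gen b m n).
Proof.
  intros Hb; split.
  - intros H; destruct (approx_trace_related _ _ H) as (_ & _ & Htr).
    eapply fle_trans; [|apply (Htr m n)]; rewrite dirac_same, fmeet_top_r.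
    unfold bop; rewrite dirac_same, fmeet_top_r; apply fjoin2_l.
  - intros H R HR HG; apply (equiv_on_of_le_trace R HR HG m n b Hb H).
Qed.

Lemma approx_iff_trace_eq x y : free_elem x -> free_elem y ->
  (approx gen x y <-> forall m n, trace_eq_b K gen (fmeet (x m) (y n)) m n).
Proof.
  intros Hx Hy; split; [intros H; apply (approx_trace_related _ _ H)|].
  intros Hxy R HR HG; apply (cong_of_local R HR _ x y (partition_meets x y Hx Hy)).
  intros c [[m [n ->]] _].
  assert (Hc : complemented (fmeet (x m) (y n)))
    by (apply complemented_meet; [apply Hx|apply Hy]).
  exists (bop (fmeet (x m) (y n)) (dirac L m) (dirac L n)), (dirac L n); split; [|split].
  - apply equiv_on_of_le_trace; auto; apply Hxy.
  - apply (agree_on_trans _ _ (dirac L m)); [apply agree_on_bop_l, fle_refl|].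
    apply agree_on_dirac; auto using fle_meet_l.
  - apply agree_on_dirac; auto using fle_meet_r.
Qed.

End Main.

Theorem lemma3p10 (M : Monad) (K : Type) (L : Frame) (gen : MT M bool -> L) :
  ranked_of_rank M K ->
  is_LB0 gen ->
  (forall x y : T1 M -> L,
      free_elem x -> free_elem y ->
      (approx gen x y <->
       forall m n : T1 M, trace_eq_b K gen (fmeet (x m) (y n)) m n)) /\
  (forall (m n : T1 M) (b : L),
      complemented b ->
      (approx gen (bop b (dirac L m) (dirac L n)) (dirac L n) <->
       trace_eq_b K gen b m n)).
Proof.
  intros Hrank Hlb; split.
  - apply (approx_iff_trace_eq K gen Hrank Hlb).
  - apply (approx_bop_dirac_iff_trace_eq K gen Hrank Hlb).
Qed.
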